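(* For all $n\ge2$ and $f_1,\dots,f_n:\mathscr{P}\to\mathbb{Q}$, $$f_1f_2\,|\,f_3\,|\,\cdots\,|\,f_n=f_1\,|\,f_2\,|\,\cdots\,|\,f_n+\sum_{A\sqcup B=\{3,\dots,n\}}\big(f_1\,|\,f_{A_1}\,|\,f_{A_2}\,|\,\cdots\big)\odot\big(f_2\,|\,f_{B_1}\,|\,f_{B_2}\,|\,\cdots\big),$$ where the sum is over ordered pairs $(A,B)$ of (possibly empty) disjoint sets with union $\{3,\dots,n\}$, $A_1,A_2,\dots$ enumerate the elements of $A$ and $B_1,B_2,\dots$ those of $B$, and a connected product with a single entry is that function itself.
   Context: $\mathscr{P}$ is the set of partitions. $f_1f_2$ is the pointwise product. Induced product: with $u_\lambda=\prod_{i:\lambda_i>0}u_{\lambda_i}$ and $\langle f\rangle_{\vec u}=\frac{\sum_\lambda f(\lambda)u_\lambda}{\sum_\lambda u_\lambda}\in\mathbb{Q}[[u_1,u_2,\dots]]$ (a linear bijection in $f$), $f\odot g$ is defined by $\langle f\odot g\rangle_{\vec u}=\langle f\rangle_{\vec u}\langle g\rangle_{\vec u}$. For functions $h_1,\dots,h_N$, the connected product is $h_1|\cdots|h_N=\sum_{\alpha\in\Pi(N)}\mu(\alpha,\mathbf{1})\bigodot_{C\in\alpha}h_C$, where $\Pi(N)$ is the set of set partitions of $\{1,\dots,N\}$, $\mu(\alpha,\mathbf{1})=(-1)^{\ell(\alpha)-1}(\ell(\alpha)-1)!$ with $\ell(\alpha)$ the number of blocks, and $h_C=\prod_{c\in C}h_c$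 (pointwise). *)

From mathcomp Require Import all_boot all_order all_algebra.
Set Implicit Arguments. Unset Strict Implicit. Unset Printing Implicit Defensive.
Import Order.TTheory GRing.Theory Num.Theory.
Local Open Scope ring_scope.

Definition is_intpart (s : seq nat) : bool :=
  sorted geq s && all (fun i => (0 < i)%N) s.
Definition intpart := {s : seq nat | is_intpart s}.

Definition pfun := intpart -> rat.

(* Formal power series in Q[[u_1,u_2,...]], stored by coefficients in the
   monomial basis: the monomial u_lambda = prod_i u_{lambda_i} corresponds
   bijectively to the partition lambda. *)
Definition series := intpart -> rat.

Definition ext (F : intpart -> rat) (s : seq nat) : rat :=
  match (insub s : option intpart) with Some p => F p | None => 0 end.

Fixpoint masks (k : nat) : seq bitseq :=
  if k is k'.+1 then [seq b :: m | b <- [:: true; false], m <- masks k']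
  else [:: [::]].

(* All (distinct) ways to write the multiset s as a union a + b. *)
Definition splits (s : seq nat) : seq (seq nat * seq nat) :=
  undup [seq (mask m s, mask (map negb m) s) | m <- masks (size s)].

(* Product of power series: u_a u_b = u_(a+b). *)
Definition smul (F G : series) : series :=
  fun l => \sum_(ab <- splits (val l)) ext F ab.1 * ext G ab.2.

Fixpoint sinv_rec (n : nat) (H : seq nat -> rat) (s : seq nat) : rat :=
  if n is n'.+1 then
    if s == [::] then (H [::])^-1
    else - (H [::])^-1 *
         \sum_(ab <- splits s | ab.1 != s) sinv_rec n' H ab.1 * H ab.2
  else (H [::])^-1.
Definition sinv (F : series) : series :=
  fun l => sinv_rec (size (val l)).+1 (ext F) (val l).

Definition Zser : series := fun _ => 1.

Definition avg (f : pfun) : series := smul f (sinv Zser).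

(* Induced product: the unique f (.) g with <f (.) g> = <f><g>;
   since <h> = h * Z^-1, this is h = <f><g> * Z. *)
Definition odot (f g : pfun) : pfun := smul (smul (avg f) (avg g)) Zser.

Definition pmul (f g : pfun) : pfun := fun l => f l * g l.
Definition pone : pfun := fun _ => 1.

Definition conn (N : nat) (h : 'I_N -> pfun) : pfun := fun l =>
  \sum_(P : {set {set 'I_N}} | partition P [set: 'I_N])
     ((-1) ^+ (#|P|.-1) * ((#|P|.-1)`!)%:R *
      (\big[odot/pone]_(C in P) (fun l' => \prod_(c in C) h c l')) l).

Definition connl (hs : seq pfun) : pfun :=
  conn (fun i : 'I_(size hs) => nth pone hs i).

From mathcomp Require Import all_boot all_order all_algebra.
From Stdlib Require Import FunctionalExtensionality.
From HB Require Import structures.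
From mathcomp Require Import ring zify.
Set Implicit Arguments. Unset Strict Implicit. Unset Printing Implicit Defensive.
Import Order.TTheory GRing.Theory Num.Theory.
Local Open Scope ring_scope.

(* Through [avg], the induced product becomes multiplication of power series,
   so [odot] is a commutative, associative and bilinear product with unit
   [pone].  Both sides then expand over set partitions P of {1, ..., n}.
   Pulling back along the map that identifies 1 and 2, the connected product
   with f_1 f_2 merged is the sum of mu(|P|) (odot of the f_C, C in P) over
   the partitions in which 1 and 2 share a block.  A term
   (f_1 | f_A) odot (f_2 | f_B) expands over pairs of partitions of {1} + A and
   {2} + B, that is over partitions P of {1, ..., n} together with the family
   Q of blocks coming from {1} + A.  When 1 and 2 lie in different blocks of P,
   the weights mu(|Q|) mu(|P| - |Q|) sum over Q to -mu(|P|), by the identity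
   sum_j C(m, j) (-1)^j j! (-1)^(m-j) (m-j)! = (-1)^m (m+1)!; these partitions
   therefore cancel against f_1 | ... | f_n. *)

(** * Splittings of a multiset *)

Lemma perm_mask_negb (T : eqType) m (s : seq T) : size m = size s ->
  perm_eq (mask m s ++ mask (map negb m) s) s.
Proof.
elim: s m => [|x s IH] [|[] m] //= [sz_m]; first by rewrite perm_cons IH.
by rewrite -cat1s perm_catCA perm_cons IH.
Qed.

Lemma merge_mask (T : Type) (r : rel T) a b :
  exists2 m, size m = size (merge r a b) &
    a = mask m (merge r a b) /\ b = mask (map negb m) (merge r a b).
Proof.
elim: a b => [|x a IHa] b.
  exists (nseq (size b) false); rewrite ?size_nseq // map_nseq.
  by rewrite mask_false mask_true.
elim: b => [|y b IHb].
  exists (nseq (size a).+1 true); rewrite ?size_nseq // map_nseq.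
  by rewrite mask_false mask_true.
rewrite [merge _ _ _]/=; case: ifP => _.
  have [m sz_m [Ea Eb]] := IHa (y :: b).
  by exists (true :: m); rewrite /= -?Ea -?Eb ?sz_m.
have [m sz_m [Ea Eb]] := IHb.
by exists (false :: m); rewrite /= -?Ea -?Eb ?sz_m.
Qed.

Lemma mem_masks k m : (m \in masks k) = (size m == k).
Proof.
elim: k m => [|k IH] [|b m] //=; rewrite cats0 mem_cat.
  by apply/negP => /orP[] /mapP[].
have cons_inj (c : bool) : injective (cons c) by move=> x y [].
rewrite eqSS -IH.
case: b; rewrite (mem_map (cons_inj _)).
  by rewrite orbC; case: mapP => // -[].
by case: mapP => // -[].
Qed.

Lemma splitsP s ab : reflect
  (exists2 m, size m = size s & ab = (mask m s, mask (map negb m) s))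
  (ab \in splits s).
Proof.
rewrite mem_undup; apply: (iffP mapP) => [[m]|[m sz_m ->]].
  by rewrite mem_masks => /eqP; exists m.
by exists m; rewrite ?mem_masks ?sz_m.
Qed.

Lemma splits_uniq s : uniq (splits s).
Proof. exact: undup_uniq. Qed.

Lemma splits_swap s a b : ((b, a) \in splits s) = ((a, b) \in splits s).
Proof.
suff swap_in c d : (c, d) \in splits s -> (d, c) \in splits s.
  by apply/idP/idP; apply: swap_in.
case/splitsP=> m sz_m [-> ->]; apply/splitsP; exists (map negb m).
  by rewrite size_map.
by rewrite (mapK negbK).
Qed.

Lemma geq_trans : transitive geq.
Proof. exact: rev_trans leq_trans. Qed.

Lemma geq_total : total geq.
Proof. by move=> x y; rewrite /= orbC leq_total. Qed.

Lemma geq_anti : antisymmetric geq.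
Proof. by move=> x y le_yx_xy; apply: anti_leq; rewrite andbC. Qed.

Lemma mem_splits s a b : sorted geq s ->
  ((a, b) \in splits s) = [&& sorted geq a, sorted geq b & perm_eq (a ++ b) s].
Proof.
move=> s_sorted; apply/splitsP/and3P => [[m sz_m [-> ->]]|[a_sorted b_sorted ab_s]].
  by rewrite !(sorted_mask geq_trans) ?perm_mask_negb.
have -> : s = merge geq a b.
  apply: (sorted_eq geq_trans geq_anti) => //; last by rewrite perm_sym perm_merge.
  exact: (merge_sorted geq_total a_sorted b_sorted).
by have [m sz_m [Ea Eb]] := merge_mask geq a b; exists m; rewrite -?Ea -?Eb.
Qed.

Lemma splits_inj1 s ab ab' : sorted geq s ->
  ab \in splits s -> ab' \in splits s -> ab.1 = ab'.1 -> ab = ab'.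
Proof.
case: ab ab' => a b [a' b'] s_sorted /= + + eq_a; rewrite -{a'}eq_a.
rewrite !mem_splits // => /and3P[_ b_sorted ab_s] /and3P[_ b'_sorted ab'_s].
congr pair; apply: (sorted_eq geq_trans geq_anti) => //.
by rewrite -(perm_cat2l a) (perm_trans ab_s) // perm_sym.
Qed.

Lemma splits_inj2 s ab ab' : sorted geq s ->
  ab \in splits s -> ab' \in splits s -> ab.2 = ab'.2 -> ab = ab'.
Proof.
case: ab ab' => a b [a' b'] s_sorted; rewrite -splits_swap -(splits_swap _ a') /=.
by move=> ba_s b'a'_s eq_b; case: (splits_inj1 s_sorted ba_s b'a'_s eq_b) => -> ->.
Qed.

Lemma mem_splits_nil s : (s, [::]) \in splits s.
Proof.
apply/splitsP; exists (nseq (size s) true); rewrite ?size_nseq //.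
by rewrite map_nseq mask_true ?mask_false.
Qed.

Lemma splits_size s a b : sorted geq s -> (a, b) \in splits s -> a != s ->
  (size a < size s)%N.
Proof.
move=> s_sorted ab_s; apply: contraNT; rewrite -leqNgt => le_s_a.
move: (ab_s); rewrite mem_splits // => /and3P[_ _ /perm_size].
rewrite size_cat; case: b ab_s => [ab_s _|? ? _ /= sz_s]; last first.
  by rewrite -sz_s addnS ltnNge leq_addr in le_s_a.
by have [->] := splits_inj2 s_sorted ab_s (mem_splits_nil s) erefl.
Qed.

(** * The ring of power series *)

Lemma intpart_sorted (l : intpart) : sorted geq (val l).
Proof. by case/andP: (valP l). Qed.

Lemma splits_intpart s a b : is_intpart s -> (a, b) \in splits s ->
  is_intpart a && is_intpart b.
Proof.
case/andP=> s_sorted s_pos /splitsP[m _ [-> ->]].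
by rewrite /is_intpart !(sorted_mask geq_trans) ?all_mask.
Qed.

Lemma ext_val (F : intpart -> rat) (l : intpart) : ext F (val l) = F l.
Proof. by rewrite /ext valK. Qed.

Lemma extE (F : intpart -> rat) s (s_part : is_intpart s) :
  ext F s = F (exist _ s s_part).
Proof. by rewrite /ext insubT. Qed.

Lemma ext_smul F G s : is_intpart s ->
  ext (smul F G) s = \sum_(ab <- splits s) ext F ab.1 * ext G ab.2.
Proof. by move=> s_part; rewrite (extE _ s_part). Qed.

Lemma perm_splits_swap s :
  perm_eq [seq (ab.2, ab.1) | ab <- splits s] (splits s).
Proof.
have swapK : involutive (fun ab : seq nat * seq nat => (ab.2, ab.1)) by case.
apply: uniq_perm; rewrite ?(map_inj_uniq (inv_inj swapK)) ?splits_uniq //.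
move=> ab; rewrite -{1}[ab]swapK (mem_map (inv_inj swapK)).
by case: ab => a b; rewrite splits_swap.
Qed.

Lemma smulC : commutative smul.
Proof.
move=> F G; apply: functional_extensionality => l.
rewrite /smul -(perm_big _ (perm_splits_swap _)) big_map.
by apply: eq_bigr => ab _; rewrite mulrC.
Qed.

Definition splits3l s : seq (seq nat * seq nat * seq nat) :=
  [seq (cd.1, cd.2, ab.2) | ab <- splits s, cd <- splits ab.1].
Definition splits3r s : seq (seq nat * seq nat * seq nat) :=
  [seq (ab.1, cd.1, cd.2) | ab <- splits s, cd <- splits ab.2].

Definition is_split3 s (t : seq nat * seq nat * seq nat) :=
  [&& sorted geq t.1.1, sorted geq t.1.2, sorted geq t.2
    & perm_eq (t.1.1 ++ t.1.2 ++ t.2) s].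

Lemma mem_splits3l s t : sorted geq s -> (t \in splits3l s) = is_split3 s t.
Proof.
move=> s_sorted; apply/allpairsPdep/idP => [[[a b] [[c d] [+ + ->]]]|].
  rewrite mem_splits // => /and3P[a_sorted b_sorted ab_s].
  rewrite mem_splits // => /and3P[c_sorted d_sorted cd_a].
  rewrite /is_split3 /= c_sorted d_sorted b_sorted catA.
  by rewrite (perm_trans _ ab_s) ?perm_cat2r.
case: t => [[c d] b] /and4P[/= c_sorted d_sorted b_sorted cdb_s].
have cd_sorted := sort_sorted geq_total (c ++ d).
exists (sort geq (c ++ d), b), (c, d); rewrite !mem_splits //= ?perm_sort.
rewrite c_sorted d_sorted cd_sorted b_sorted (perm_trans _ cdb_s) /=; last first.
  by rewrite catA perm_cat2r perm_sort.
by split; rewrite // perm_sym perm_sort.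
Qed.

Lemma mem_splits3r s t : sorted geq s -> (t \in splits3r s) = is_split3 s t.
Proof.
move=> s_sorted; apply/allpairsPdep/idP => [[[a b] [[c d] [+ + ->]]]|].
  rewrite mem_splits // => /and3P[a_sorted b_sorted ab_s].
  rewrite mem_splits // => /and3P[c_sorted d_sorted cd_b].
  rewrite /is_split3 /= c_sorted d_sorted a_sorted.
  by rewrite (perm_trans _ ab_s) ?perm_cat2l.
case: t => [[a c] d] /and4P[/= a_sorted c_sorted d_sorted acd_s].
have cd_sorted := sort_sorted geq_total (c ++ d).
exists (a, sort geq (c ++ d)), (c, d); rewrite !mem_splits //= ?perm_sort.
rewrite c_sorted d_sorted cd_sorted a_sorted (perm_trans _ acd_s) /=; last first.
  by rewrite perm_cat2l perm_sort.
by split; rewrite // perm_sym perm_sort.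
Qed.

Lemma splits3l_uniq s : sorted geq s -> uniq (splits3l s).
Proof.
move=> s_sorted; apply: allpairs_uniq_dep => [|ab _|]; rewrite ?splits_uniq //.
move=> _ _ /allpairsPdep[ab [cd [ab_s _ ->]]] /allpairsPdep[ab' [cd' [ab'_s _ ->]]].
case: cd cd' => c d [c' d'] /= [-> -> eq_b].
by rewrite (splits_inj2 s_sorted ab_s ab'_s eq_b).
Qed.

Lemma splits3r_uniq s : sorted geq s -> uniq (splits3r s).
Proof.
move=> s_sorted; apply: allpairs_uniq_dep => [|ab _|]; rewrite ?splits_uniq //.
move=> _ _ /allpairsPdep[ab [cd [ab_s _ ->]]] /allpairsPdep[ab' [cd' [ab'_s _ ->]]].
case: cd cd' => c d [c' d'] /= [eq_a -> ->].
by rewrite (splits_inj1 s_sorted ab_s ab'_s eq_a).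
Qed.

Lemma perm_splits3 s : sorted geq s -> perm_eq (splits3l s) (splits3r s).
Proof.
move=> s_sorted; apply: uniq_perm; rewrite ?splits3l_uniq ?splits3r_uniq //.
by move=> t; rewrite mem_splits3l ?mem_splits3r.
Qed.

Lemma smulA : associative smul.
Proof.
move=> F G H; apply: functional_extensionality => l.
have l_part : is_intpart (val l) := valP l.
transitivity (\sum_(t <- splits3r (val l)) ext F t.1.1 * ext G t.1.2 * ext H t.2).
  rewrite /smul /splits3r big_allpairs_dep; apply: eq_big_seq => -[a b] /=.
  move/(splits_intpart l_part)/andP=> [_ b_part].
  by rewrite ext_smul // mulr_sumr; apply: eq_bigr => cd _; rewrite mulrA.
rewrite -(perm_big _ (perm_splits3 (intpart_sorted l))).
rewrite /smul /splits3l big_allpairs_dep; apply: eq_big_seq => -[a b] /=.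
move/(splits_intpart l_part)/andP=> [a_part _].
by rewrite ext_smul // mulr_suml.
Qed.

Definition sone : series := fun l => (val l == [::])%:R.

Lemma ext_sone s : ext sone s = (s == [::])%:R.
Proof. by rewrite /ext; case: insubP => [l _ <-|/negP s_npart] //; case: s s_npart. Qed.

Lemma smulr1 F : smul F sone = F.
Proof.
apply: functional_extensionality => l; have s_sorted := intpart_sorted l.
rewrite /smul (bigD1_seq _ (mem_splits_nil _) (splits_uniq _)) /= ext_val ext_sone.
rewrite mulr1 big_seq_cond big1 ?addr0 // => -[a b] /andP[ab_s ab_neq] /=.
rewrite ext_sone; case: eqP => [b_nil|]; last by rewrite mulr0.
move: ab_s ab_neq; rewrite b_nil => ab_s.
by rewrite (splits_inj2 s_sorted ab_s (mem_splits_nil _)) ?eqxx.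
Qed.

Lemma sinv_rec_fuel H n1 n2 s : sorted geq s ->
  (size s < n1)%N -> (size s < n2)%N -> sinv_rec n1 H s = sinv_rec n2 H s.
Proof.
elim: n1 n2 s => [|n1 IH] [|n2] s s_sorted //= lt_s_n1 lt_s_n2.
case: eqP => // _; congr (_ * _).
rewrite big_seq_cond [RHS]big_seq_cond; apply: eq_bigr => -[a b] /andP[ab_s a_neq].
have lt_a_s := splits_size s_sorted ab_s a_neq.
move: ab_s; rewrite mem_splits // => /and3P[a_sorted _ _] /=.
by rewrite (IH n2) // (leq_trans lt_a_s).
Qed.

Lemma smul_sinvl F : ext F [::] != 0 -> smul (sinv F) F = sone.
Proof.
move=> F0_neq0; apply: functional_extensionality => -[s s_part].
have s_sorted : sorted geq s by case/andP: s_part.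
rewrite /smul /= (bigD1_seq _ (mem_splits_nil _) (splits_uniq _)) /= (extE _ s_part).
rewrite /sinv /sone; case: s s_part s_sorted => [|x s] s_part s_sorted.
  by rewrite /splits /= big_cons big_nil eqxx !addr0 mulVf.
set rest := (X in _ * _ + X).
have -> : rest = \sum_(ab <- splits (x :: s) | ab.1 != x :: s)
                   sinv_rec (size s).+1 (ext F) ab.1 * ext F ab.2.
  rewrite /rest big_seq_cond [RHS]big_seq_cond.
  pose proper_split ab := (ab \in splits (x :: s)) && (ab.1 != x :: s).
  rewrite (eq_bigl proper_split); last first.
    move=> [a b]; rewrite /proper_split; case: (boolP (_ \in _)) => //= ab_s.
    congr negb; apply/eqP/eqP => [[-> _] //|eq_a].
    exact: (splits_inj1 s_sorted ab_s (mem_splits_nil _) eq_a).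
  apply: eq_bigr => -[a b] /andP[ab_s a_neq].
  have /andP[a_part _] := splits_intpart s_part ab_s.
  rewrite (extE _ a_part); congr (_ * _); apply: sinv_rec_fuel => //.
    by case/andP: (a_part).
  exact: splits_size s_sorted ab_s a_neq.
by rewrite [sinv_rec _ _ (_ :: _)]/= mulrAC mulNr mulVf // mulN1r addNr.
Qed.

Lemma smul_sinvZ : smul (sinv Zser) Zser = sone.
Proof. by apply: smul_sinvl; rewrite (extE _ (isT : is_intpart [::])) oner_neq0. Qed.

Lemma avg_odot f g : avg (odot f g) = smul (avg f) (avg g).
Proof. by rewrite /avg /odot -smulA (smulC Zser) smul_sinvZ smulr1. Qed.

Lemma odotA : associative odot.
Proof.
move=> f g h; rewrite -[LHS]/(smul (smul (avg f) (avg (odot g h))) Zser).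
by rewrite -[RHS]/(smul (smul (avg (odot f g)) (avg h)) Zser) !avg_odot smulA.
Qed.

Lemma odotC : commutative odot.
Proof. by move=> f g; rewrite /odot (smulC (avg f)). Qed.

Lemma odot1f : left_id pone odot.
Proof.
have avg1 : avg pone = sone by rewrite /avg smulC smul_sinvZ.
by move=> f; rewrite /odot avg1 (smulC sone) smulr1 /avg -smulA smul_sinvZ smulr1.
Qed.

HB.instance Definition _ :=
  Monoid.isComLaw.Build pfun pone odot odotA odotC odot1f.

Lemma smul_suml (I : Type) (r : seq I) (P : pred I) (c : I -> rat)
    (F : I -> series) G :
  smul (fun l => \sum_(i <- r | P i) c i * F i l) G =
  fun l => \sum_(i <- r | P i) c i * smul (F i) G l.
Proof.
apply: functional_extensionality => l.
have ext_sum s : ext (fun l => \sum_(i <- r | P i) c i * F i l) s =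
                 \sum_(i <- r | P i) c i * ext (F i) s.
  by rewrite /ext; case: insubP => // _; rewrite big1 // => i _; rewrite mulr0.
rewrite /smul; under eq_bigr do rewrite ext_sum mulr_suml.
rewrite exchange_big /=; apply: eq_bigr => i _.
by rewrite mulr_sumr; apply: eq_bigr => ab _; rewrite mulrA.
Qed.

Lemma odot_suml (I : Type) (r : seq I) (P : pred I) (c : I -> rat)
    (F : I -> pfun) g :
  odot (fun l => \sum_(i <- r | P i) c i * F i l) g =
  fun l => \sum_(i <- r | P i) c i * odot (F i) g l.
Proof. by rewrite /odot /avg !smul_suml. Qed.

Lemma odot_sumr (I : Type) (r : seq I) (P : pred I) (c : I -> rat)
    (F : I -> pfun) g :
  odot g (fun l => \sum_(i <- r | P i) c i * F i l) =
  fun l => \sum_(i <- r | P i) c i * odot g (F i) l.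
Proof.
rewrite odotC odot_suml; apply: functional_extensionality => l.
by under eq_bigr do rewrite odotC.
Qed.

(** * Connected products over a finite index set *)

Definition mu (k : nat) : rat := (-1) ^+ k.-1 * (k.-1)`!%:R.

Definition blockprod (T : finType) (h : T -> pfun) (C : {set T}) : pfun :=
  fun l => \prod_(c in C) h c l.

Definition odot_blocks (T : finType) (h : T -> pfun) (P : {set {set T}}) : pfun :=
  \big[odot/pone]_(C in P) blockprod h C.

Definition conn_on (T : finType) (S : {set T}) (h : T -> pfun) : pfun := fun l =>
  \sum_(P | partition P S) mu #|P| * odot_blocks h P l.

Lemma connE N (h : 'I_N -> pfun) : conn h = conn_on [set: 'I_N] h.
Proof. by []. Qed.

Definition saturated (T T' : finType) (q : T -> T') (S : {set T}) P :=
  [forall x in S, forall y in S, (q x == q y) ==> (pblock P x == pblock P y)].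

Section Fibres.
Variables (T T' : finType) (q : T -> T') (S : {set T}).
Hypothesis q_onto : forall y, exists2 x, x \in S & q x = y.

Let preim (C : {set T'}) := S :&: q @^-1: C.

Let preim_inj : injective preim.
Proof.
move=> C1 C2 /setP eqC; apply/setP => y; have [x xS <-] := q_onto y.
by move: (eqC x); rewrite !inE xS.
Qed.

Lemma partition_preim P' : partition P' [set: T'] ->
  partition (preim @: P') S && saturated q S (preim @: P').
Proof.
move=> P'_part; have cover_P' := cover_partition P'_part.
have preim_pblock x : x \in S -> x \in preim (pblock P' (q x)).
  by move=> xS; rewrite !inE xS mem_pblock cover_P' inE.
have pblock_preim x : x \in S -> preim (pblock P' (q x)) \in preim @: P'.
  by move=> xS; rewrite imset_f // pblock_mem // cover_P' inE.
have triv : trivIset (preim @: P').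
  apply/trivIsetP => _ _ /imsetP[C1 C1P' ->] /imsetP[C2 C2P' ->] neq.
  have neqC : C1 != C2 by apply: contraNneq neq => ->.
  have /disjoint_setI0/setP dis :=
    trivIsetP (partition_trivIset P'_part) C1 C2 C1P' C2P' neqC.
  rewrite -setI_eq0; apply/eqP/setP => x; rewrite !inE.
  apply/negP => /andP[/andP[_ x1] /andP[_ x2]].
  by move: (dis (q x)); rewrite !inE x1 x2.
have pblockE x : x \in S -> pblock (preim @: P') x = preim (pblock P' (q x)).
  by move=> xS; apply: def_pblock => //; [apply: pblock_preim | apply: preim_pblock].
apply/andP; split.
  apply/and3P; split => //.
    apply/eqP/setP => x; apply/bigcupP/idP => [[_ /imsetP[C _ ->]]|xS].
      by rewrite inE => /andP[].
    by exists (preim (pblock P' (q x))); [apply: pblock_preim | apply: preim_pblock].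
  apply/imsetP => -[C CP' /setP empty].
  have [y yC] := set0Pn _ (partition_neq0 P'_part CP'); have [x xS qx] := q_onto y.
  by move: (empty x); rewrite !inE xS qx yC.
apply/forallP => x; apply/implyP => xS; apply/forallP => y; apply/implyP => yS.
by apply/implyP => /eqP eq_q; rewrite !pblockE // eq_q.
Qed.

Lemma saturated_preim P : partition P S -> saturated q S P ->
  exists2 P', partition P' [set: T'] & P = preim @: P'.
Proof.
move=> P_part P_sat; have P_triv := partition_trivIset P_part.
have cover_P := cover_partition P_part.
have in_S x B : B \in P -> x \in B -> x \in S.
  by move=> BP xB; rewrite -cover_P; apply/bigcupP; exists B.
have same_block x y : x \in S -> y \in S -> q x = q y -> pblock P x = pblock P y.
  move=> xS yS eq_q; move/forallP/(_ x): P_sat; rewrite xS => /forallP/(_ y).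
  by rewrite yS eq_q eqxx => /eqP.
have preim_image B : B \in P -> preim (q @: B) = B.
  move=> BP; apply/setP => x; rewrite !inE.
  apply/andP/idP => [[xS /imsetP[y yB eq_q]]|xB]; last by rewrite (in_S x B) ?imset_f.
  have := same_block x y xS (in_S y B BP yB) eq_q.
  by rewrite (def_pblock P_triv BP yB) => <-; rewrite mem_pblock cover_P.
exists [set q @: (B : {set T}) | B in P]; last first.
  rewrite -imset_comp; apply/setP => B; apply/idP/imsetP => [BP|[B' B'P ->]].
    by exists B; rewrite //= preim_image.
  by rewrite /= preim_image.
apply/and3P; split.
- apply/eqP/setP => y; rewrite inE; have [x xS <-] := q_onto y.
  apply/bigcupP; exists (q @: pblock P x); last first.
    by rewrite imset_f // mem_pblock cover_P.
  by rewrite imset_f // pblock_mem // cover_P.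
- apply/trivIsetP => _ _ /imsetP[B1 B1P ->] /imsetP[B2 B2P ->] neq.
  rewrite -setI_eq0; apply/eqP/setP => z; rewrite !inE.
  apply/negP => /andP[/imsetP[x1 x1B ->] /imsetP[x2 x2B eq_q]].
  move: neq; have := same_block x1 x2 (in_S _ _ B1P x1B) (in_S _ _ B2P x2B) eq_q.
  rewrite (def_pblock P_triv B1P x1B) (def_pblock P_triv B2P x2B) => ->.
  by rewrite eqxx.
- apply/imsetP => -[B BP /esym/eqP]; rewrite imset_eq0 => /eqP B0.
  by move: (partition_neq0 P_part BP); rewrite B0 eqxx.
Qed.

Lemma conn_on_fibres (h : T -> pfun) l :
  conn_on [set: T'] (fun y l => \prod_(x in S | q x == y) h x l) l =
  \sum_(P | partition P S && saturated q S P) mu #|P| * odot_blocks h P l.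
Proof.
pose parts := [set P' : {set {set T'}} | partition P' [set: T']].
transitivity (\sum_(P' in parts) mu #|preim @: P'| * odot_blocks h (preim @: P') l).
  apply: eq_big => [P'|P' _]; first by rewrite inE.
  rewrite card_imset // /odot_blocks big_imset /=; last first.
    by move=> ? ? _ _; apply: preim_inj.
  congr (_ * _ l); apply: eq_bigr => C _; apply: functional_extensionality => l'.
  rewrite /blockprod (partition_big q (mem C)) /=; last first.
    by move=> x; rewrite !inE => /andP[].
  apply: eq_bigr => y yC; apply: eq_bigl => x; rewrite !inE.
  by case: eqP => [->|]; rewrite ?yC ?andbT ?andbF.
rewrite -(big_imset (fun P : {set {set T}} => mu #|P| * odot_blocks h P l)) /=;
  last by move=> P1 P2 _ _; apply: imset_inj.
apply: eq_bigl => P; apply/imsetP/andP => [[P' P'_part ->]|[P_part P_sat]].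
  by apply/andP/partition_preim; rewrite inE in P'_part.
by have [P' P'_part ->] := saturated_preim P_part P_sat; exists P'; rewrite ?inE.
Qed.

End Fibres.

Lemma odot_blocksU (T : finType) (h : T -> pfun) (P1 P2 : {set {set T}}) :
  [disjoint P1 & P2] ->
  odot (odot_blocks h P1) (odot_blocks h P2) = odot_blocks h (P1 :|: P2).
Proof.
move=> dis; rewrite /odot_blocks [RHS](big_setID P1) /= setUK setDUl setDv set0U.
by rewrite (setDidPl _ : P2 :\: P1 = P2) // disjoint_sym.
Qed.

Lemma partitions_disjoint (T : finType) (P1 P2 : {set {set T}}) S1 S2 :
  partition P1 S1 -> partition P2 S2 -> [disjoint S1 & S2] -> [disjoint P1 & P2].
Proof.
move=> P1_part P2_part dis; apply/pred0P => C /=; apply/negP => /andP[C1 C2].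
have /set0Pn[x xC] := partition_neq0 P1_part C1.
have := disjointFr dis (subsetP (partitionS P1_part C1) x xC).
by rewrite (subsetP (partitionS P2_part C2) x xC).
Qed.

Lemma odot_conn_on (T : finType) (h : T -> pfun) (S1 S2 : {set T}) l :
  [disjoint S1 & S2] ->
  odot (conn_on S1 h) (conn_on S2 h) l =
  \sum_(P1 | partition P1 S1) \sum_(P2 | partition P2 S2)
     mu #|P1| * mu #|P2| * odot_blocks h (P1 :|: P2) l.
Proof.
move=> dis; rewrite {1}/conn_on odot_suml; apply: eq_bigr => P1 P1_part.
rewrite /conn_on odot_sumr mulr_sumr; apply: eq_bigr => P2 P2_part.
by rewrite odot_blocksU ?mulrA // (partitions_disjoint P1_part P2_part dis).
Qed.

Lemma mu_convolution m :
  \sum_(j < m.+1) 'C(m, j)%:R * (mu j.+1 * mu (m - j).+1) = - mu m.+2.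
Proof.
have term (j : 'I_m.+1) : 'C(m, j)%:R * (mu j.+1 * mu (m - j).+1) =
                          (-1) ^+ m * m`!%:R :> rat.
  have le_jm : (j <= m)%N by rewrite -ltnS.
  rewrite /mu /= -(bin_fact le_jm) !natrM.
  by rewrite mulrACA -exprD subnKC //; apply: mulrCA.
rewrite (eq_bigr _ (fun j _ => term j)) sumr_const card_ord /mu /=.
by rewrite -mulr_natr exprS factS natrM; ring.
Qed.

Lemma sum_subsets_card (U : finType) (Y : {set U}) (phi : nat -> rat) :
  \sum_(D : {set U} | D \subset Y) phi #|D| =
  \sum_(j < #|Y|.+1) 'C(#|Y|, j)%:R * phi j.
Proof.
rewrite (partition_big (fun D : {set U} => inord #|D| : 'I_#|Y|.+1) xpredT) //=.
apply: eq_bigr => j _.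
set draws := [set D : {set U} | D \subset Y & #|D| == j].
rewrite (eq_bigl (fun D => D \in draws)); last first.
  move=> D; rewrite !inE; case: (boolP (D \subset Y)) => //= DY.
  by rewrite -val_eqE /= inordK // ltnS subset_leq_card.
rewrite (eq_bigr (fun _ => phi j)); last by move=> D; rewrite inE => /andP[_ /eqP ->].
by rewrite sumr_const cards_draws mulr_natl.
Qed.

Lemma sum_subsets_separating (U : finType) (R : {set U}) x y (F : {set U} -> rat) :
  x \in R -> x != y ->
  \sum_(A : {set U} | (A \subset R) && (x \in A) && (y \notin A)) F A =
  \sum_(D : {set U} | D \subset R :\ x :\ y) F (x |: D).
Proof.
move=> xR neq_xy.
rewrite (reindex_onto (fun D : {set U} => x |: D) (fun A : {set U} => A :\ x)) /=;
  last by move=> A /andP[/andP[_ xA] _]; rewrite setD1K.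
apply: eq_bigl => D; rewrite setU11 andbT in_setU1 negb_or eq_sym neq_xy /=.
apply/andP/idP => [[/andP[xDR yD] /eqP DE]|DR].
  have xD : x \notin D by rewrite -DE setD11.
  apply/subsetP => z zD; rewrite !inE (subsetP xDR z) ?inE ?zD ?orbT // andbT.
  by apply/andP; split; apply: contraTneq zD => ->.
have xD : x \notin D by apply/negP => /(subsetP DR); rewrite !inE eqxx andbF.
rewrite setU1K // eqxx; split => //; apply/andP; split.
  by apply/subsetP => z /setU1P[-> //|/(subsetP DR)]; rewrite !inE => /and3P[].
by apply/negP => /(subsetP DR); rewrite !inE eqxx.
Qed.

Lemma sum_mu_separating (U : finType) (R : {set U}) x y :
  x \in R -> y \in R -> x != y ->
  \sum_(A : {set U} | (A \subset R) && (x \in A) && (y \notin A))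
     mu #|A| * mu (#|R| - #|A|) = - mu #|R|.
Proof.
move=> xR yR neq_xy; rewrite sum_subsets_separating //.
set Y := R :\ x :\ y.
have card_R : #|R| = #|Y|.+2.
  by rewrite (cardsD1 x R) xR (cardsD1 y (R :\ x)) !inE eq_sym neq_xy yR.
have xD (D : {set U}) : D \subset Y -> x \notin D.
  by move=> DY; apply/negP => /(subsetP DY); rewrite !inE eqxx andbF.
under eq_bigr => D DY do rewrite cardsU1 (xD D DY) card_R add1n subSS.
rewrite (sum_subsets_card Y (fun j => mu j.+1 * mu (#|Y|.+1 - j))).
rewrite card_R -mu_convolution.
by apply: eq_bigr => j _; rewrite subSn // -ltnS.
Qed.

Lemma setUD_sub (T : finType) (A B : {set T}) : A \subset B -> A :|: B :\: A = B.
Proof. by move=> AB; rewrite -{2}(setID B A) (setIidPr AB). Qed.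

Section Joined.
Variable T : finType.
Implicit Types (P Q : {set {set T}}) (A : {set T}).

Lemma partition_cover_sub P Q D : partition P D -> Q \subset P -> partition Q (cover Q).
Proof.
move=> /and3P[_ P_triv P_no0] QP; apply/and3P; split => //.
  exact: trivIsetS P_triv.
by apply: contra P_no0 => /(subsetP QP).
Qed.

Lemma mem_cover_sub P Q x : partition P [set: T] -> Q \subset P ->
  (x \in cover Q) = (pblock P x \in Q).
Proof.
move=> P_part QP; have P_triv := partition_trivIset P_part.
apply/bigcupP/idP => [[C CQ xC]|xQ].
  by rewrite (def_pblock P_triv (subsetP QP _ CQ) xC).
by exists (pblock P x); rewrite // mem_pblock (cover_partition P_part) inE.
Qed.

Lemma sum_partitions_compl Q (F : {set {set T}} -> rat) :
  partition Q (cover Q) ->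
  \sum_(R | partition R (~: cover Q)) F R =
  \sum_(P | partition P [set: T] && (Q \subset P)) F (P :\: Q).
Proof.
move=> Q_part.
pose ext_parts := [set P | partition P [set: T] & Q \subset P].
have diff_inj : {in ext_parts &, injective (fun P => P :\: Q)}.
  move=> P1 P2; rewrite !inE => /andP[_ QP1] /andP[_ QP2] eqD.
  by rewrite -(setUD_sub QP1) eqD setUD_sub.
rewrite [RHS](eq_bigl (fun P => P \in ext_parts)); last by move=> P; rewrite inE.
rewrite -(big_imset _ diff_inj); apply: eq_bigl => R /=.
apply/idP/imsetP => [R_part|[P]]; last first.
  rewrite inE => /andP[P_part QP] ->; have P_triv := partition_trivIset P_part.
  apply/and3P; split; [|exact: trivIsetD|by rewrite inE (partition0 P_part) andbF].
  apply/eqP/setP => x; rewrite inE (mem_cover_sub x P_part QP).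
  apply/bigcupP/idP => [[C /setDP[CP CQ] xC]|xQ].
    by rewrite (def_pblock P_triv CP xC).
  have xP : x \in cover P by rewrite (cover_partition P_part) inE.
  by exists (pblock P x); rewrite ?inE ?xQ ?pblock_mem ?mem_pblock.
have dis : [disjoint Q & R].
  by apply: (partitions_disjoint Q_part R_part); rewrite -setI_eq0 setICr.
exists (Q :|: R).
  rewrite inE subsetUl andbT; apply/and3P; split.
  - rewrite /cover bigcup_setU -/(cover Q) -/(cover R).
    by rewrite (cover_partition R_part) setUCr.
  - apply: trivIsetU; rewrite ?(partition_trivIset Q_part) //.
      exact: partition_trivIset R_part.
    by rewrite (cover_partition R_part) -setI_eq0 setICr.
  - by rewrite inE (partition0 Q_part) (partition0 R_part).
by rewrite setDUl setDv set0U; apply/esym/setDidPl; rewrite disjoint_sym.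
Qed.

Variables (h : T -> pfun) (a b : T).
Hypothesis neq_ab : a != b.

Definition separating Q :=
  [&& partition Q (cover Q), a \in cover Q & b \notin cover Q].

Lemma sum_odot_conn_on_splits l :
  \sum_(A : {set T} | A \subset ~: [set a; b])
     odot (conn_on (a |: A) h) (conn_on (b |: (~: [set a; b] :\: A)) h) l =
  \sum_(Q | separating Q) \sum_(R : {set {set T}} | partition R (~: cover Q))
     mu #|Q| * mu #|R| * odot_blocks h (Q :|: R) l.
Proof.
have inX A x : A \subset ~: [set a; b] -> x \in A -> (x != a) && (x != b).
  by move=> AX /(subsetP AX); rewrite !inE negb_or.
have compl A : A \subset ~: [set a; b] -> b |: (~: [set a; b] :\: A) = ~: (a |: A).
  move=> AX; apply/setP => x; rewrite !inE negb_or.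
  have [->|neq_xb] := eqVneq x b; last by rewrite andbT negb_or andbC.
  have bA : b \notin A by apply/negP => /(inX _ _ AX); rewrite eqxx andbF.
  by rewrite eq_sym (negbTE neq_ab) (negbTE bA).
rewrite (eq_bigr _ (fun A AX => congr1 (fun S => odot _ (conn_on S h) l) (compl A AX))).
under eq_bigr => A AX do rewrite odot_conn_on -?setI_eq0 ?setICr //.
rewrite (exchange_big_dep separating) /=; last first.
  move=> A Q AX Q_part; rewrite /separating (cover_partition Q_part) Q_part setU11 /=.
  rewrite !inE negb_or eq_sym neq_ab.
  by apply/negP => /(inX _ _ AX); rewrite eqxx andbF.
apply: eq_bigr => Q /and3P[Q_part aQ bQ].
rewrite (big_pred1 (cover Q :\ a)) => [|A]; first by rewrite setD1K.
apply/andP/eqP => [[AX A_part]|->].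
  rewrite (cover_partition A_part) setU1K //.
  by apply/negP => /(inX _ _ AX); rewrite eqxx.
rewrite setD1K //; split => //; apply/subsetP => x.
by rewrite !inE negb_or => /andP[-> xQ] /=; apply: contraNneq bQ => <-.
Qed.

Lemma sum_separating_partitions l :
  \sum_(Q | separating Q) \sum_(R : {set {set T}} | partition R (~: cover Q))
     mu #|Q| * mu #|R| * odot_blocks h (Q :|: R) l =
  \sum_(P | partition P [set: T])
     (\sum_(Q : {set {set T}} |
             (Q \subset P) && (pblock P a \in Q) && (pblock P b \notin Q))
        mu #|Q| * mu (#|P| - #|Q|)) * odot_blocks h P l.
Proof.
transitivity (\sum_(Q | separating Q) \sum_(P | partition P [set: T] && (Q \subset P))
                mu #|Q| * mu (#|P| - #|Q|) * odot_blocks h P l).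
  apply: eq_bigr => Q /and3P[Q_part _ _]; rewrite sum_partitions_compl //.
  by apply: eq_bigr => P /andP[_ QP]; rewrite setUD_sub // cardsD (setIidPr QP).
rewrite (exchange_big_dep (fun P => partition P [set: T])) /=; last first.
  by move=> Q P _ /andP[].
apply: eq_bigr => P P_part; rewrite mulr_suml; apply: eq_bigl => Q.
rewrite P_part /=; case: (boolP (Q \subset P)) => QP; last by rewrite !andbF.
rewrite andbT /separating (partition_cover_sub P_part QP).
by rewrite !(mem_cover_sub _ P_part QP).
Qed.

End Joined.

Definition conn_joined (T : finType) (a b : T) (h : T -> pfun) : pfun := fun l =>
  \sum_(P | partition P [set: T] && (pblock P a == pblock P b))
     mu #|P| * odot_blocks h P l.

Lemma conn_joinedE (T : finType) (h : T -> pfun) (a b : T) l : a != b ->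
  conn_joined a b h l = conn_on [set: T] h l +
  \sum_(A : {set T} | A \subset ~: [set a; b])
     odot (conn_on (a |: A) h) (conn_on (b |: (~: [set a; b] :\: A)) h) l.
Proof.
move=> neq_ab; rewrite sum_odot_conn_on_splits // sum_separating_partitions.
rewrite /conn_on /conn_joined -big_split /=.
rewrite [RHS](bigID (fun P => pblock P a == pblock P b)) /=.
rewrite [X in _ + X]big1 ?addr0; last first.
  move=> P /andP[P_part neq_blocks].
  have [aP bP] : pblock P a \in P /\ pblock P b \in P.
    by rewrite !pblock_mem // (cover_partition P_part) inE.
  by rewrite sum_mu_separating // mulNr addrN.
apply: eq_bigr => P /andP[_ /eqP same].
by rewrite big1 ?mul0r ?addr0 // => Q; rewrite same => /andP[/andP[_ ->]].
Qed.

(** * Labelled lists of functions *)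

Lemma saturated_inj (T T' : finType) (q : T -> T') (S : {set T}) P :
  {in S &, injective q} -> saturated q S P.
Proof.
move=> q_inj; apply/forallP => x; apply/implyP => xS; apply/forallP => y.
by apply/implyP => yS; apply/implyP => /eqP/(q_inj _ _ xS yS) ->.
Qed.

Lemma saturated_pair (T T' : finType) (q : T -> T') (a b : T) P :
  q a = q b ->
  (forall x y, q x = q y -> [\/ x = y, x = a /\ y = b | x = b /\ y = a]) ->
  saturated q [set: T] P = (pblock P a == pblock P b).
Proof.
move=> qab q_fibres; apply/forallP/eqP => [sat|same x].
  move/implyP/(_ (in_setT a))/forallP/(_ b): (sat a).
  by rewrite in_setT qab eqxx => /eqP.
apply/implyP => _; apply/forallP => y; apply/implyP => _; apply/implyP => /eqP.
by case/q_fibres => [->|[-> ->]|[-> ->]]; rewrite ?same.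
Qed.

Lemma connl_conn_on (N k : nat) (s : seq nat) (f : nat -> pfun) l :
  uniq (k :: s) -> all (fun i => (0 < i <= N)%N) (k :: s) ->
  connl (map f (k :: s)) l =
  conn_on [set x : 'I_N | x.+1 \in k :: s] (fun x => f x.+1) l.
Proof.
set ks := k :: s; move=> ks_uniq ks_range.
set S := [set x : 'I_N | x.+1 \in ks].
pose q (x : 'I_N) : 'I_(size (map f ks)) := inord (index x.+1 ks).
have qE x : x \in S -> val (q x) = index x.+1 ks.
  rewrite inE => xks; have lt_x : (index x.+1 ks < size (map f ks))%N.
    by rewrite size_map index_mem.
  by rewrite /q /= inordK.
have q_inj : {in S &, injective q}.
  move=> x y xS yS /(congr1 val); rewrite !qE //.
  by move: xS yS; rewrite !in_set => xS yS /(index_inj 0%N xS yS) [] /val_inj.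
have q_onto y : exists2 x, x \in S & q x = y.
  have lt_y : (y < size ks)%N by rewrite -(size_map f).
  have /andP[pos_y le_y] := allP ks_range _ (mem_nth 0%N lt_y).
  have lt_yN : ((nth 0%N ks y).-1 < N)%N by rewrite prednK.
  have yS : Ordinal lt_yN \in S by rewrite in_set /= prednK ?mem_nth.
  exists (Ordinal lt_yN) => //; apply: val_inj; rewrite qE //.
  have -> : (Ordinal lt_yN).+1 = nth 0%N ks y by rewrite /= prednK.
  by rewrite index_uniq.
rewrite /connl connE.
have -> : (fun i : 'I_(size (map f ks)) => nth pone (map f ks) i) =
          (fun y l => \prod_(x in S | q x == y) f x.+1 l).
  apply: functional_extensionality => y; apply: functional_extensionality => l'.
  have [x xS <-] := q_onto y.
  rewrite (big_pred1 x) => [|x' /=]; last first.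
    by apply/andP/eqP => [[x'S /eqP /q_inj]|->]; [apply|].
  have xks : x.+1 \in ks by rewrite in_set in xS.
  by rewrite qE // (nth_map 0%N) ?nth_index ?index_mem.
by rewrite conn_on_fibres //; apply: eq_bigl => P; rewrite saturated_inj ?andbT.
Qed.

Lemma connl_merge (N : nat) (f : nat -> pfun) l :
  connl (pmul (f 1%N) (f 2%N) :: [seq f i | i <- iota 3 N]) l =
  conn_joined ord0 (inord 1) (fun x : 'I_N.+2 => f x.+1) l.
Proof.
set hs := pmul (f 1%N) (f 2%N) :: _.
have size_hs : size hs = N.+1 by rewrite /= size_map size_iota.
have size_fs : size [seq f i | i <- iota 3 N] = N by rewrite size_map size_iota.
(* The truncated predecessor sends both f_1 and f_2 to the head f_1 f_2. *)
pose q (x : 'I_N.+2) : 'I_(size hs) := inord x.-1.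
have qE x : val (q x) = x.-1.
  by rewrite /q /= inordK // size_fs; have := ltn_ord x; lia.
have val1 : val (inord 1 : 'I_N.+2) = 1%N by rewrite /= inordK.
have q_onto y : exists2 x, x \in [set: 'I_N.+2] & q x = y.
  have lt_y : (y.+1 < N.+2)%N.
    by have := ltn_ord y; rewrite [in X in (_ < X)%N -> _]size_hs.
  by exists (Ordinal lt_y); rewrite ?in_setT //; apply: val_inj; rewrite qE.
have q_fibres x y : q x = q y ->
    [\/ x = y, x = ord0 /\ y = inord 1 | x = inord 1 /\ y = ord0].
  move/(congr1 val); rewrite !qE => eq_pred.
  have [->|neq_xy] := eqVneq x y; first by constructor 1.
  have : (val x == 0%N) && (val y == 1%N) || (val x == 1%N) && (val y == 0%N).
    by move: neq_xy eq_pred; rewrite -val_eqE /=; lia.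
  by case/orP=> /andP[/eqP x0 /eqP y1]; [constructor 2 | constructor 3];
    split; apply: val_inj; rewrite ?val1.
rewrite /connl connE.
have -> : (fun i : 'I_(size hs) => nth pone hs i) =
          (fun y l => \prod_(x in [set: 'I_N.+2] | q x == y) f x.+1 l).
  apply: functional_extensionality => -[[|j] lt_j];
    apply: functional_extensionality => l'.
    rewrite (bigD1 ord0) ?in_setT /=; last by rewrite -val_eqE /= qE.
    rewrite (big_pred1 (inord 1)) /= ?inordK // => x.
    rewrite in_setT -!val_eqE /= qE -[x == _]val_eqE val1.
    by case: x => [[|[|x]] ?].
  have lt_jN : (j < N)%N by have := lt_j; rewrite size_hs.
  rewrite (big_pred1 (inord j.+2)) /=.
    by rewrite inordK ?(nth_map 0%N) ?nth_iota ?size_iota.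
  move=> x; rewrite in_setT -!val_eqE /= qE -[x == _]val_eqE /= inordK //.
  lia.
have q01 : q ord0 = q (inord 1) by apply: val_inj; rewrite !qE val1.
rewrite conn_on_fibres //; apply: eq_bigl => P.
by rewrite (saturated_pair _ q01 q_fibres).
Qed.

Section MaskSets.
Variable N : nat.

Definition mask_set (m : N.-tuple bool) : {set 'I_N.+2} :=
  [set x : 'I_N.+2 | x.+1 \in mask m (iota 3 N)].

Lemma mem_iota3 (x : 'I_N.+2) : (x.+1 \in iota 3 N) = (2 <= x)%N.
Proof. by rewrite mem_iota; have := ltn_ord x; lia. Qed.

Lemma mem_setC01 (x : 'I_N.+2) : (x \in ~: [set ord0; inord 1]) = (2 <= x)%N.
Proof. by rewrite !inE -!val_eqE /= inordK //; case: x => [[|[|x]] ?]. Qed.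

Lemma index_iota3 (x : 'I_N.+2) : (2 <= x)%N -> index x.+1 (iota 3 N) = (x - 2)%N.
Proof.
move=> le2x; have lt_x : (x - 2 < N)%N by have := ltn_ord x; lia.
have -> : x.+1 = nth 0%N (iota 3 N) (x - 2) by rewrite nth_iota //; lia.
by rewrite index_uniq ?size_iota ?iota_uniq.
Qed.

Lemma mem_mask_set m x : (x \in mask_set m) = (2 <= x)%N && nth false m (x - 2).
Proof.
rewrite inE in_mask ?iota_uniq // mem_iota3.
by case: (boolP (2 <= x)%N) => //= le2x; rewrite index_iota3.
Qed.

Lemma mask_set_cons1 (m : N.-tuple bool) :
  [set x : 'I_N.+2 | x.+1 \in 1%N :: mask m (iota 3 N)] = ord0 |: mask_set m.
Proof. by apply/setP => x; rewrite !inE -val_eqE /= eqSS. Qed.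

Lemma mask_set_cons2 (m : N.-tuple bool) :
  [set x : 'I_N.+2 | x.+1 \in 2%N :: mask (map negb m) (iota 3 N)] =
  inord 1 |: (~: [set ord0; inord 1] :\: mask_set m).
Proof.
apply/setP => x; rewrite in_setU1 in_setD mem_setC01 mem_mask_set in_set in_cons.
rewrite -val_eqE /= inordK // eqSS in_mask ?iota_uniq // mem_iota3.
case: (boolP (2 <= x)%N) => [le2x|]; last by rewrite !andbF.
rewrite index_iota3 // (nth_map false) /= ?andbT //.
by rewrite size_tuple; have := ltn_ord x; lia.
Qed.

Lemma mask_set_inj : injective mask_set.
Proof.
move=> m1 m2 /setP eq_m; apply: val_inj; apply: (@eq_from_nth _ false).
  by rewrite !size_tuple.
move=> i; rewrite size_tuple => lt_iN.
have lt_i2 : (i.+2 < N.+2)%N by [].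
by move: (eq_m (inord i.+2)); rewrite !mem_mask_set inordK //= subn2.
Qed.

Lemma sum_mask_sets (F : {set 'I_N.+2} -> rat) :
  \sum_(m : N.-tuple bool) F (mask_set m) =
  \sum_(A : {set 'I_N.+2} | A \subset ~: [set ord0; inord 1]) F A.
Proof.
rewrite -[LHS](big_imset _ (in2W mask_set_inj)) /=; apply: eq_bigl => A.
apply/imsetP/subsetP => [[m _ ->] x|AX].
  by rewrite mem_mask_set mem_setC01 => /andP[].
pose m := mkseq (fun i => (inord i.+2 : 'I_N.+2) \in A) N.
have size_m : size m == N by rewrite size_mkseq.
exists (Tuple size_m) => //; apply/setP => x; rewrite mem_mask_set.
have [le2x|lt_x2] := boolP (2 <= x)%N; last first.
  by apply/negbTE; apply: contra lt_x2 => /AX; rewrite mem_setC01.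
rewrite /= nth_mkseq; last by have := ltn_ord x; lia.
by congr (_ \in A); apply: val_inj; rewrite /= inordK; [lia | have := ltn_ord x; lia].
Qed.

Lemma connl_mask (f : nat -> pfun) k (m : bitseq) : (0 < k < 3)%N ->
  connl (f k :: [seq f i | i <- mask m (iota 3 N)]) =
  conn_on [set x : 'I_N.+2 | x.+1 \in k :: mask m (iota 3 N)] (fun x => f x.+1).
Proof.
move=> k_range; apply: functional_extensionality => l; apply: connl_conn_on.
  rewrite /= mask_uniq ?iota_uniq // andbT.
  by apply/negP => /mem_mask; rewrite mem_iota; lia.
rewrite /= andbC; apply/andP; split; last by lia.
by apply/allP => i /mem_mask; rewrite mem_iota; lia.
Qed.

Lemma connl_iota (f : nat -> pfun) :
  connl [seq f i | i <- iota 1 N.+2] = conn_on [set: 'I_N.+2] (fun x => f x.+1).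
Proof.
apply: functional_extensionality => l.
rewrite [iota 1 _]/= (connl_conn_on (N := N.+2)).
- congr (conn_on _ _ l); apply/setP => x.
  rewrite in_setT in_set -[_ :: _]/(iota 1 N.+2) mem_iota.
  by have := ltn_ord x; lia.
- exact: (iota_uniq 1 N.+2).
by apply/allP => i; rewrite -[_ :: _]/(iota 1 N.+2) mem_iota; lia.
Qed.

End MaskSets.

Theorem proposition3p2p7 (n : nat) (f : nat -> pfun) :
  (2 <= n)%N ->
  forall l : intpart,
    connl (pmul (f 1%N) (f 2%N) :: [seq f i | i <- iota 3 (n - 2)]) l =
    connl [seq f i | i <- iota 1 n] l +
    \sum_(m : (n - 2).-tuple bool)
      odot (connl (f 1%N :: [seq f i | i <- mask m (iota 3 (n - 2))]))
           (connl (f 2%N :: [seq f i | i <- mask (map negb m) (iota 3 (n - 2))])) l.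
Proof.
move=> le2n l; have nE : n = (n - 2)%N.+2 by lia.
move: (n - 2)%N nE => N ->.
have neq01 : ord0 != inord 1 :> 'I_N.+2 by rewrite -val_eqE /= inordK.
rewrite connl_merge conn_joinedE // connl_iota -sum_mask_sets; congr (_ + _).
apply: eq_bigr => m _.
by rewrite !connl_mask // mask_set_cons1 mask_set_cons2.
Qed.
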